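(* Let $(X,\mathcal B)$ be any $(K_4-e)$-design of order $11$, and let $D=\{\{x,y\}:\ [x,y,z-u]\in\mathcal B\}$. Then the graph $(X,D)$ is a cycle of length $11$.
   Context: $K_4-e$ is the graph on four vertices $a,b,c,d$ with edges $ab,ac,ad,bc,bd$; it is denoted $[a,b,c-d]$ (so in $[x,y,z-u]$ the vertices $x,y$ have degree $3$, $z,u$ have degree $2$, and $zu$ is the missing edge). A $(K_4-e)$-design of order $v$ is a pair $(X,\mathcal B)$ where $X$ is a set of $v$ vertices and $\mathcal B$ is a collection of copies of $K_4-e$ (called blocks) with vertices in $X$ whose edge sets partition the edge set of the complete graph $K_v$ on $X$. *)

From mathcomp Require Import all_boot.
Set Implicit Arguments. Unset Strict Implicit. Unset Printing Implicit Defensive.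

(* A copy of K_4 - e, written [x,y,z-u], is the 4-tuple (x,y,z,u) of
   vertices; its edges are xy, xz, xu, yz, yu (zu is missing). *)
Definition block (T : finType) : Type := (T * T * T * T)%type.

Section K4e.
Variable T : finType.

Definition bx (b : block T) : T := b.1.1.1.
Definition by_ (b : block T) : T := b.1.1.2.
Definition bz (b : block T) : T := b.1.2.
Definition bu (b : block T) : T := b.2.

Definition block_ok (b : block T) : bool :=
  uniq [:: bx b; by_ b; bz b; bu b].

Definition block_edges (b : block T) : {set {set T}} :=
  [set [set bx b; by_ b]; [set bx b; bz b]; [set bx b; bu b];
       [set by_ b; bz b]; [set by_ b; bu b]].

Definition K4e_design (B : seq (block T)) : Prop :=
  (forall b, b \in B -> block_ok b) /\
  (forall a c : T, a != c ->
     count (fun b => [set a; c] \in block_edges b) B = 1).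

Definition deg3_pairs (B : seq (block T)) : {set {set T}} :=
  [set [set bx b; by_ b] | b in B].

Definition is_cycle_graph (n : nat) (D : {set {set T}}) : Prop :=
  exists f : 'I_n -> T, bijective f /\
    D = [set [set f i; f (ordS i)] | i : 'I_n].

End K4e.

From mathcomp Require Import all_boot zify.
Set Implicit Arguments. Unset Strict Implicit. Unset Printing Implicit Defensive.

(* The 10 edges at a
   vertex v are covered by the blocks through v, three at a time when v is one of x, y
   and two at a time otherwise; so v lies in 0 or 2 pairs, and as the 11 blocks have 22
   such incidences, D is 2-regular, i.e. a disjoint union of cycles.  If S is a union of
   components of D, the C(|S|,2) edges inside S come from the blocks with their pair in
   S, each giving its pair plus two edges per vertex z, u in S; hence C(|S|,2) - |S| is
   even and |S| is 0 or 3 mod 4.  A component is no 4-cycle, since z and u are neither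
   on nor adjacent to the pair {x,y}, and no 8-cycle, by the chord count below.  So the
   components have 3, 7 or 11 vertices, and only 11 leaves a complement whose
   components again have admissible sizes. *)

Lemma count_sum (I : Type) (s : seq I) (P : pred I) : count P s = \sum_(i <- s) P i.
Proof. by rewrite -sum1_count big_mkcond. Qed.

Section SetFacts.
Variable T : finType.

Lemma eq_set2 (a b c d : T) :
  ([set a; b] == [set c; d]) = (a == c) && (b == d) || (a == d) && (b == c).
Proof.
apply/eqP/idP => [E|]; last by case/orP=> /andP[/eqP-> /eqP->] //; rewrite setUC.
have: [/\ a \in [set c; d], b \in [set c; d], c \in [set a; b] & d \in [set a; b]].
  by split; [rewrite -E | rewrite -E | rewrite E | rewrite E]; rewrite !inE eqxx ?orbT.
rewrite !inE => -[/orP[]/eqP-> /orP[]/eqP-> /orP[]/eqP Ec /orP[]/eqP Ed];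
  by rewrite ?eqxx ?orbT //= ?Ec ?Ed ?eqxx ?orbT.
Qed.

Lemma set2_inj (a b c : T) : [set a; b] = [set a; c] -> b = c.
Proof. by move/eqP; rewrite eq_set2 eqxx => /orP[/eqP | /andP[/eqP <- /eqP]]. Qed.

Lemma card_set2_at v : #|[set e : {set T} | (v \in e) && (#|e| == 2)]| = #|T|.-1.
Proof.
have -> : [set e : {set T} | (v \in e) && (#|e| == 2)] = [set [set v; w] | w in [set~ v]].
  apply/setP => e; rewrite inE; apply/andP/imsetP => [[ve /cards2P[p [q [pq Ee]]]]|[w]].
    move: ve; rewrite Ee !inE => /orP[]/eqP->; first by exists q; rewrite // !inE eq_sym.
    by exists p; [rewrite !inE | rewrite setUC].
  by rewrite !inE => wv ->; rewrite set21 cards2 (eq_sym v) wv.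
by rewrite card_imset ?cardsC1 //; apply: set2_inj.
Qed.

Lemma sum_mem (A S : {set T}) : \sum_(v in S) (v \in A) = #|A :&: S|.
Proof.
rewrite -sum1_card [LHS]big_mkcond [RHS]big_mkcond; apply: eq_bigr => v _.
by rewrite !inE; case: (v \in A); case: (v \in S).
Qed.

Lemma sum_count_mem (I : Type) (s : seq I) (A : I -> {set T}) (S : {set T}) :
  \sum_(v in S) count (fun i => v \in A i) s = \sum_(i <- s) #|A i :&: S|.
Proof.
elim: s => [|i s IH]; first by rewrite big_nil big1.
by rewrite big_cons -IH -sum_mem -big_split.
Qed.

Lemma mem_set2_nat (a b v : T) : a != b -> v \in [set a; b] = (v == a) + (v == b) :> nat.
Proof. by move=> ab; rewrite !inE; case: eqP => [->|_]; rewrite ?(negbTE ab). Qed.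

End SetFacts.

Section TwoRegularGraph.
Variables (T : finType) (adj : rel T).
Hypotheses (adj_sym : symmetric adj) (adj_irr : irreflexive adj).
Hypothesis adj_deg2 : forall v, #|[set w | adj v w]| = 2.

Definition adj_closed (S : {set T}) := forall x y, adj x y -> x \in S -> y \in S.

Lemma adj_closedC S : adj_closed S -> adj_closed (~: S).
Proof. by move=> clS x y xy; rewrite !inE; apply: contra; apply: clS; rewrite adj_sym. Qed.

Lemma adj_closedD S1 S2 : adj_closed S1 -> adj_closed S2 -> adj_closed (S1 :\: S2).
Proof.
move=> cl1 cl2 x y xy /setDP[xS1 xS2]; rewrite inE (cl1 x) // andbT.
by apply: contra xS2; apply: cl2; rewrite adj_sym.
Qed.

Lemma adj_two_nbrs c p q : adj c p -> adj c q -> p != q ->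
  forall x, adj c x = (x == p) || (x == q).
Proof.
move=> cp cq pq x.
have Nc : [set w | adj c w] = [set p; q].
  apply/esym/eqP; rewrite eqEcard adj_deg2 cards2 pq andbT.
  by apply/subsetP => w; rewrite !inE => /orP[]/eqP->.
by rewrite -[RHS](in_set2 x p q) -Nc inE.
Qed.

Definition other_nbr (p c : T) := odflt c [pick w | adj c w & w != p].

Lemma other_nbr_spec p c : adj c (other_nbr p c) && (other_nbr p c != p).
Proof.
rewrite /other_nbr; case: pickP => [w //|none].
have /cards2P[w1 [w2 [w12 Nc]]] : #|[set w | adj c w]| == 2 by rewrite adj_deg2.
have adj_c w : w \in [set w1; w2] -> adj c w by rewrite -Nc inE.
move: (none w1) (none w2); rewrite (adj_c w1) ?set21 // (adj_c w2) ?set22 //=.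
by move=> /negbFE/eqP e1 /negbFE/eqP e2; rewrite e1 e2 eqxx in w12.
Qed.

Lemma adj_other_nbr p c : adj c p -> forall x, adj c x = (x == p) || (x == other_nbr p c).
Proof.
by case/andP: (other_nbr_spec p c) => cn np cp; apply: adj_two_nbrs; rewrite // eq_sym.
Qed.

Section Walk.
Variable a : T.

Fixpoint walk n :=
  if n is n'.+1 then
    if n' is n''.+1 then other_nbr (walk n'') (walk n') else other_nbr a a
  else a.

Lemma walkSS n : walk n.+2 = other_nbr (walk n) (walk n.+1).
Proof. by []. Qed.

Lemma walk_adj n : adj (walk n) (walk n.+1).
Proof.
case: n => [|n]; first by case/andP: (other_nbr_spec a a).
by case/andP: (other_nbr_spec (walk n) (walk n.+1)).
Qed.

Lemma walk_nbrs n x : adj (walk n.+1) x = (x == walk n) || (x == walk n.+2).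
Proof. by apply: adj_other_nbr; rewrite adj_sym walk_adj. Qed.

Lemma walk_neq n : walk n.+1 != walk n.
Proof. by apply: contraTneq (walk_adj n) => ->; rewrite adj_irr. Qed.

Lemma walk_neq2 n : walk n.+2 != walk n.
Proof. by case/andP: (other_nbr_spec (walk n) (walk n.+1)). Qed.

Lemma walk_repeats : exists j, [exists i : 'I_j, walk i == walk j].
Proof.
have /injectivePn[i [j ij Eij]] : ~~ injectiveb (fun i : 'I_#|T|.+1 => walk i).
  by apply/injectiveP => /leq_card; rewrite card_ord ltnn.
case: (ltngtP i j) => [lt_ij|lt_ji|/val_inj eq_ij]; last by rewrite eq_ij eqxx in ij.
  by exists j; apply/existsP; exists (Ordinal lt_ij); rewrite /= Eij.
by exists i; apply/existsP; exists (Ordinal lt_ji); rewrite /= Eij.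
Qed.

Lemma walk_first_return : exists k, [/\ 2 < k, walk k = a, walk k.+1 = walk 1 &
  forall i j, i < k -> j < k -> walk i = walk j -> i = j].
Proof.
case: (ex_minnP walk_repeats) => k /existsP[i0 /eqP Ei0] k_min.
have no_repeat i j : i < j -> j < k -> walk i != walk j.
  move=> ij jk; apply/eqP => Eij; suff: k <= j by rewrite leqNgt jk.
  by apply: k_min; apply/existsP; exists (Ordinal ij); rewrite /= Eij.
have walk_inj i j : i < k -> j < k -> walk i = walk j -> i = j.
  move=> ik jk E; case: (ltngtP i j) => // [ij | ji].
    by move: (no_repeat i j ij jk); rewrite E eqxx.
  by move: (no_repeat j i ji ik); rewrite E eqxx.
(* A first repetition at an inner vertex would give it three neighbours on the walk. *)
have Ek0 : walk k = a.
  case Ei : (nat_of_ord i0) Ei0 (ltn_ord i0) => [|i] // Ei0 ik.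
  case: k ik Ei0 walk_inj {k_min i0 Ei no_repeat} => // k ik Ei0 walk_inj.
  have := walk_adj k; rewrite -Ei0 adj_sym walk_nbrs => /orP[]/eqP Ek.
    by have := walk_inj _ _ (ltnW ik) (leqnn _) (esym Ek); lia.
  case: (ltngtP i.+2 k.+1) => [lt_ik|lt_ki|eq_ik].
  - have Eik := walk_inj _ _ lt_ik (ltnSn k) (esym Ek).
    by move: (walk_neq2 i.+1); rewrite Ei0 -Eik eqxx.
  - by lia.
  - by move: (walk_neq i.+1); rewrite Ei0 -eq_ik eqxx.
have k2 : 2 < k.
  case: k i0 Ek0 {k_min Ei0 walk_inj no_repeat} => [[]|[|[|k]]] // _ Ek0.
  - by move: (walk_neq 0); rewrite Ek0 eqxx.
  - by move: (walk_neq2 0); rewrite Ek0 eqxx.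
exists k; split; [done | done | | exact: walk_inj].
have: adj (walk k) (walk 1) by rewrite Ek0; exact: (walk_adj 0).
case: k Ek0 k2 walk_inj {k_min i0 Ei0 no_repeat} => // k Ek0 k2 walk_inj.
rewrite walk_nbrs => /orP[]/eqP // E1k.
by have := walk_inj _ _ (ltnW k2) (ltnSn k) E1k; lia.
Qed.

Lemma walk_mod : exists2 k, 0 < k & forall n m, (walk n == walk m) = (n == m %[mod k]).
Proof.
have [k [k2 Ek Ek1 walk_inj]] := walk_first_return.
have walk_addk n : walk (n + k) = walk n.
  suff: walk (n + k) = walk n /\ walk (n.+1 + k) = walk n.+1 by case.
  elim: n => [|n [IH1 IH2]]; first by rewrite add0n add1n Ek Ek1.
  by split=> //; rewrite !addSn !walkSS -addSn IH1 IH2.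
have walk_modk n : walk n = walk (n %% k).
  rewrite {1}(divn_eq n k); elim: (n %/ k) => [|q IH]; first by rewrite mul0n add0n.
  by rewrite mulSn -addnA addnC walk_addk.
exists k => [|n m]; first by lia.
rewrite walk_modk [walk m]walk_modk; apply/eqP/eqP => [|->] //.
by apply: walk_inj; rewrite ltn_mod; lia.
Qed.

End Walk.

(* [f] runs periodically around a cycle of length [k]; since every [f n] has both its
   neighbours on it, this cycle is a connected component. *)
Definition cycle_walk k (f : nat -> T) := [/\ 0 < k,
  forall n m, (f n == f m) = (n == m %[mod k]) &
  forall n x, adj (f n.+1) x = (x == f n) || (x == f n.+2)].

Lemma cycle_through a : exists k f, f 0 = a /\ cycle_walk k f.
Proof.
have [k k_gt0 walk_eq] := walk_mod a.
by exists k, (walk a); split=> //; split=> // n; apply: walk_nbrs.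
Qed.

Section Cycle.
Variables (k : nat) (f : nat -> T).
Hypothesis fk : cycle_walk k f.

Let k_gt0 : 0 < k. Proof. by case: fk. Qed.
Lemma cycle_eq n m : (f n == f m) = (n == m %[mod k]).
Proof. by case: fk. Qed.
Let f_nbrs : forall n x, adj (f n.+1) x = (x == f n) || (x == f n.+2). Proof. by case: fk. Qed.

Definition cycle_verts := [set f i | i : 'I_k].

Lemma cycle_modk n : f n = f (n %% k).
Proof. by apply/eqP; rewrite cycle_eq modn_mod. Qed.

Lemma cycle_predk n : f (n + k.-1).+1 = f n.
Proof. by apply/eqP; rewrite -addnS prednK // cycle_eq modnDr. Qed.

Lemma cycle_ordS (i : 'I_k) : f (ordS i) = f i.+1.
Proof. by apply/eqP; rewrite cycle_eq /= modn_mod. Qed.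

Lemma cycle_adj n : adj (f n) (f n.+1).
Proof. by rewrite adj_sym f_nbrs eqxx. Qed.

Lemma cycle_vertsP x : reflect (exists n, x = f n) (x \in cycle_verts).
Proof.
apply: (iffP imsetP) => [[i _ ->]|[n ->]]; first by exists i.
by exists (Ordinal (ltn_pmod n k_gt0)); rewrite // cycle_modk.
Qed.

Lemma cycle_ord_inj : injective (fun i : 'I_k => f i).
Proof. by move=> i j /eqP; rewrite cycle_eq !modn_small // => /eqP /val_inj. Qed.

Lemma card_cycle_verts : #|cycle_verts| = k.
Proof. by rewrite card_imset ?card_ord //; apply: cycle_ord_inj. Qed.

Lemma cycle_edge x y : adj x y -> x \in cycle_verts ->
  exists i, [set x; y] = [set f i.+1; f i.+2].
Proof.
move=> xy /cycle_vertsP[n Ex]; move: xy.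
rewrite Ex -[f n]cycle_predk f_nbrs => /orP[]/eqP->; last by exists (n + k.-1).
set m := n + k.-1; exists (m + k.-1).
by rewrite cycle_predk -addSn cycle_predk setUC.
Qed.

Lemma cycle_verts_closed : adj_closed cycle_verts.
Proof.
move=> x y /cycle_edge Exy /Exy[i Ei].
have: y \in [set x; y] by rewrite set22.
by rewrite Ei !inE => /orP[]/eqP->; apply/cycle_vertsP; [exists i.+1 | exists i.+2].
Qed.

Lemma cycle_verts_sub S : adj_closed S -> f 0 \in S -> cycle_verts \subset S.
Proof.
move=> clS f0S; have fS n : f n \in S by elim: n => // n; apply: clS (cycle_adj n).
by apply/subsetP => x /cycle_vertsP[n ->].
Qed.

Lemma cycle_far i j : f j \notin [set f i.+1; f i.+2] ->
  ~~ adj (f i.+1) (f j) -> ~~ adj (f i.+2) (f j) ->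
  [/\ j != i %[mod k], j != i.+1 %[mod k], j != i.+2 %[mod k] & j != i.+3 %[mod k]].
Proof.
rewrite !inE !f_nbrs !cycle_eq !negb_or.
by case/andP=> ? ? /andP[? ?] /andP[? ?]; split.
Qed.

Definition chords d := [set [set f n; f (n + d)] | n : 'I_k].

Lemma mem_chords d p q :
  ([set f p; f q] \in chords d) = (q == p + d %[mod k]) || (p == q + d %[mod k]).
Proof.
apply/imsetP/idP => [[n _ /eqP]|].
  rewrite eq_set2 !cycle_eq => /orP[]/andP[/eqP Ep /eqP Eq]; apply/orP; [left|right].
    by rewrite Eq -modnDml -Ep modnDml.
  by rewrite Ep -modnDml -Eq modnDml.
case/orP => E.
  exists (Ordinal (ltn_pmod p k_gt0)) => //=.
  by rewrite -cycle_modk; congr [set _; _]; apply/eqP; rewrite cycle_eq modnDml.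
exists (Ordinal (ltn_pmod q k_gt0)) => //=.
by rewrite -cycle_modk setUC; congr [set _; _]; apply/eqP; rewrite cycle_eq modnDml.
Qed.

Lemma chords_cycle_verts d e x : e \in chords d -> x \in e -> x \in cycle_verts.
Proof. by case/imsetP => n _ -> /set2P[]->; apply/cycle_vertsP; [exists n | exists (n + d)]. Qed.

End Cycle.

End TwoRegularGraph.

Section Design.
Variables (T : finType) (B : seq (block T)).
Hypotheses (T11 : #|T| = 11) (desB : K4e_design B).

Local Notation pair b := [set bx b; by_ b].
Local Notation slots b := [set bz b; bu b].
Implicit Types (b : block T) (S : {set T}).

Lemma block_neq b : b \in B -> [&& bx b != by_ b, bx b != bz b, bx b != bu b,
  by_ b != bz b, by_ b != bu b & bz b != bu b].
Proof.
move=> /desB.1; rewrite /block_ok /= !inE !negb_or.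
by case/and4P => /and3P[-> -> ->] /andP[-> ->] -> _.
Qed.

Definition edge_seq b :=
  [:: pair b; [set bx b; bz b]; [set bx b; bu b]; [set by_ b; bz b]; [set by_ b; bu b]].

Lemma mem_edge_seq b : block_edges b =i edge_seq b.
Proof. by move=> e; rewrite !inE -!orbA. Qed.

Lemma edge_seq_card2 b : b \in B -> all (fun e : {set T} => #|e| == 2) (edge_seq b).
Proof. by case/block_neq/and5P => xy xz xu yz /andP[yu _]; rewrite /= !cards2 xy xz xu yz yu. Qed.

Lemma uniq_edge_seq b : b \in B -> uniq (edge_seq b).
Proof.
case/block_neq/and5P => /negbTE xy /negbTE xz /negbTE xu /negbTE yz /andP[/negbTE yu /negbTE zu].
have sym (p q : T) : (p == q) = false -> (q == p) = false by rewrite eq_sym.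
rewrite /= !inE !eq_set2 !eqxx /=.
by rewrite ?(xy, xz, xu, yz, yu, zu, sym _ _ xy, sym _ _ xz, sym _ _ xu,
  sym _ _ yz, sym _ _ yu, sym _ _ zu).
Qed.

Lemma count_edges (E : {set {set T}}) : {in E, forall e : {set T}, #|e| = 2} ->
  \sum_(b <- B) count (mem E) (edge_seq b) = #|E|.
Proof.
move=> E2; rewrite -sum1_card.
transitivity (\sum_(e in E) \sum_(b <- B) (e \in block_edges b : nat)).
  rewrite exchange_big; apply: eq_big_seq => b bB.
  rewrite -sum1_count big_mkcond /= big_uniq ?uniq_edge_seq //.
  rewrite big_mkcond [RHS]big_mkcond; apply: eq_bigr => e _.
  by rewrite mem_edge_seq; case: (e \in edge_seq b); case: (e \in E).
apply: eq_bigr => e /E2/eqP/cards2P[p [q [pq ->]]].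
by have := desB.2 p q pq; rewrite -sum1_count big_mkcond.
Qed.

Lemma pair_card2 b : b \in B -> #|pair b| = 2.
Proof. by case/block_neq/andP => xy _; rewrite cards2 xy. Qed.

Lemma pair_in_edges b : pair b \in block_edges b.
Proof. by rewrite !inE eqxx. Qed.

Lemma edge_block_unique b b' e : b \in B -> b' \in B ->
  e \in block_edges b -> e \in block_edges b' -> #|e| = 2 -> b = b'.
Proof.
move=> bB b'B eb eb' /eqP/cards2P[p [q [pq Ee]]]; rewrite {}Ee in eb eb'.
case: (eqVneq b b') => // neq.
suff: 2 <= count (fun c => [set p; q] \in block_edges c) B by rewrite desB.2.
rewrite -size_filter; apply: (uniq_leq_size (s1 := [:: b; b'])); first by rewrite /= inE neq.
by move=> c; rewrite !inE mem_filter => /orP[]/eqP->; rewrite ?eb ?eb'.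
Qed.

Lemma uniq_B : uniq B.
Proof.
apply: count_mem_uniq => b; case: (boolP (b \in B)) => [bB|/count_memPn //].
have: count_mem b B <= 1.
  rewrite -(desB.2 (bx b) (by_ b)); last by case/block_neq/andP: bB.
  by apply: sub_count => c /eqP->; apply: pair_in_edges.
by rewrite -has_pred1 has_count in bB; lia.
Qed.

Lemma pair_inj : {in B &, injective (fun b => pair b)}.
Proof.
move=> b b' bB b'B E; apply: (edge_block_unique bB b'B (pair_in_edges b)).
  by rewrite E pair_in_edges.
exact: pair_card2.
Qed.

Lemma deg3_edge_pair b e : b \in B -> e \in block_edges b -> e \in deg3_pairs B -> e = pair b.
Proof.
move=> bB eb /imsetP[b' b'B Ee]; rewrite Ee in eb *.
by rewrite (edge_block_unique b'B bB (pair_in_edges b') eb (pair_card2 b'B)).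
Qed.

Lemma pair_slots_disjoint b : b \in B -> [disjoint pair b & slots b].
Proof.
case/block_neq/and5P => _ xz xu yz /andP[yu _].
by rewrite disjoints_subset subUset !sub1set !inE !negb_or xz xu yz yu.
Qed.

Definition deg3_adj : rel T := fun x y => [set x; y] \in deg3_pairs B.

Lemma deg3_adj_sym : symmetric deg3_adj.
Proof. by move=> x y; rewrite /deg3_adj setUC. Qed.

Lemma deg3_adj_irr : irreflexive deg3_adj.
Proof. by move=> x; apply/imsetP => -[b bB E]; have := pair_card2 bB; rewrite -E setUid cards1. Qed.

Lemma deg3_adj_pair b : b \in B -> deg3_adj (bx b) (by_ b).
Proof. exact: imset_f. Qed.

Lemma slot_nadj b p z : b \in B -> p \in pair b -> z \in slots b -> ~~ deg3_adj p z.
Proof.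
move=> bB pb zb; apply/negP => /(deg3_edge_pair bB) pz_pair.
have: z \in pair b.
  rewrite -pz_pair ?set22 //.
  by move: pb zb; rewrite !inE => /orP[]/eqP-> /orP[]/eqP->; rewrite eqxx ?orbT.
by rewrite (disjointFl (pair_slots_disjoint bB) zb).
Qed.

Definition deg3_count v := count (fun b => v \in pair b) B.

Lemma count_edges_at v b : b \in B ->
  count (fun e : {set T} => v \in e) (edge_seq b) = 3 * (v \in pair b) + 2 * (v \in slots b).
Proof.
by case/block_neq/and5P => xy xz xu yz /andP[yu zu]; rewrite /= !mem_set2_nat //; lia.
Qed.

Lemma size_B : size B = 11.
Proof.
suff: 5 * size B = 'C(#|T|, 2) by rewrite T11 (_ : 'C(11, 2) = 55) //; lia.
rewrite -card_draws -count_edges => [|e]; last by rewrite inE => /eqP.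
rewrite (eq_big_seq (fun=> 5)) => [|b bB]; first by rewrite big_const_seq count_predT iter_addn_0.
have := edge_seq_card2 bB; rewrite all_count [size _]/= => /eqP <-.
by apply: eq_count => e /=; rewrite inE.
Qed.

Lemma deg3_count_slots v :
  3 * deg3_count v + 2 * count (fun b => v \in slots b) B = 10.
Proof.
have <- : #|[set e : {set T} | (v \in e) && (#|e| == 2)]| = 10 by rewrite card_set2_at T11.
rewrite -count_edges => [|e]; last by rewrite inE => /andP[_ /eqP].
rewrite /deg3_count !count_sum !big_distrr -big_split.
apply: eq_big_seq => b bB /=; rewrite -count_edges_at //.
apply: eq_in_count => e /(allP (edge_seq_card2 bB)) e2.
by rewrite -[RHS]/(e \in _) inE e2 andbT.
Qed.

Lemma deg3_count2 v : deg3_count v = 2.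
Proof.
have deg_le w : deg3_count w <= 2 by have := deg3_count_slots w; lia.
have deg_sum : \sum_w deg3_count w = 22.
  rewrite (eq_bigl (fun w => w \in [set: T])) => [|w]; last by rewrite inE.
  rewrite sum_count_mem.
  rewrite (eq_big_seq (fun=> 2)) => [|b bB]; last by rewrite setIT pair_card2.
  by rewrite big_const_seq count_predT iter_addn_0 size_B.
suff: deg3_count v != 0 by have := deg3_count_slots v; lia.
apply/eqP => dv0; move: deg_sum; rewrite (bigD1 v) //= dv0 add0n.
have: \sum_(w | w != v) deg3_count w <= \sum_(w | w != v) 2
  by apply: leq_sum => w _; apply: deg_le.
by rewrite sum_nat_const cardC1 T11; lia.
Qed.

Definition mate v b := if bx b == v then by_ b else bx b.

Lemma pair_mate v b : v \in pair b -> pair b = [set v; mate v b].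
Proof.
rewrite /mate; case: ifP => [/eqP-> // | /negbT xv].
by rewrite !inE (eq_sym v) (negbTE xv) /= => /eqP->; apply: setUC.
Qed.

Lemma deg3_nbrs v :
  [set w | deg3_adj v w] = [set mate v b | b in [set b | (b \in B) && (v \in pair b)]].
Proof.
apply/setP => w; rewrite inE; apply/imsetP/imsetP => [[b bB Ew]|[b]].
  have vb : v \in pair b by rewrite -Ew set21.
  by exists b; [rewrite inE bB | move: (pair_mate vb); rewrite -Ew => /set2_inj].
by rewrite inE => /andP[bB vb] ->; exists b; rewrite // -pair_mate.
Qed.

Lemma deg3_adj_deg2 v : #|[set w | deg3_adj v w]| = 2.
Proof.
rewrite deg3_nbrs card_in_imset => [|b b']; last first.
  rewrite inE => /andP[bB vb]; rewrite inE => /andP[b'B vb'] Eo.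
  by apply: pair_inj; rewrite // (pair_mate vb) (pair_mate vb') Eo.
rewrite -(deg3_count2 v) /deg3_count -size_filter -(card_uniqP (filter_uniq _ uniq_B)).
by apply: eq_card => b; rewrite mem_filter inE andbC.
Qed.

Lemma closed_pair S b : adj_closed deg3_adj S -> b \in B -> (bx b \in S) = (by_ b \in S).
Proof.
move=> clS bB; have xy := deg3_adj_pair bB.
by apply/idP/idP; apply: clS; rewrite // deg3_adj_sym.
Qed.

Lemma count_pairs_in S : adj_closed deg3_adj S -> count (fun b => bx b \in S) B = #|S|.
Proof.
move=> clS; apply/eqP; rewrite -(eqn_pmul2l (isT : 0 < 2)); apply/eqP.
transitivity (\sum_(v in S) deg3_count v).
  rewrite sum_count_mem count_sum big_distrr; apply: eq_big_seq => b bB /=.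
  case: (boolP (bx b \in S)) => xS.
    by rewrite (setIidPl _) ?pair_card2 // subUset !sub1set -(closed_pair clS bB) xS.
  rewrite (_ : _ :&: S = set0) ?cards0 //; apply/setP => v; rewrite !inE.
  by apply/negP => /andP[/orP[]/eqP-> ]; rewrite -?(closed_pair clS bB) (negbTE xS).
by rewrite (eq_bigr (fun=> 2)) => [|v _]; rewrite ?sum_nat_const 1?mulnC ?deg3_count2.
Qed.

Definition inner_slots S := \sum_(b <- B) (bx b \in S) * ((bz b \in S) + (bu b \in S)).

Lemma count_edges_in S b : (bx b \in S) = (by_ b \in S) ->
  count (fun e : {set T} => e \subset S) (edge_seq b) =
    (bx b \in S) + 2 * ((bx b \in S) * ((bz b \in S) + (bu b \in S))).
Proof.
move=> xyS; rewrite /= !subUset !sub1set -xyS.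
by case: (bx b \in S); case: (bz b \in S); case: (bu b \in S).
Qed.

Lemma closed_edges S : adj_closed deg3_adj S -> 'C(#|S|, 2) = #|S| + 2 * inner_slots S.
Proof.
move=> clS; rewrite -cards_draws -count_edges => [|e]; last by rewrite inE => /andP[_ /eqP].
rewrite -(count_pairs_in clS) (count_sum B) /inner_slots big_distrr -big_split.
apply: eq_big_seq => b bB.
rewrite (eq_in_count (a2 := fun e : {set T} => e \subset S)) => [|e].
  by rewrite count_edges_in ?(closed_pair clS bB).
by move=> /(allP (edge_seq_card2 bB)) e2; rewrite -[LHS]/(e \in _) inE e2 andbT.
Qed.

Lemma closed_card_mod4 S : adj_closed deg3_adj S -> (#|S| %% 4 == 0) || (#|S| %% 4 == 3).
Proof. by move/closed_edges; rewrite bin2; nia. Qed.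

Section DesignCycle.
Variables (k : nat) (f : nat -> T).
Hypothesis fk : cycle_walk deg3_adj k f.
Local Notation C := (cycle_verts k f).

Lemma pair_on_cycle b : b \in B -> bx b \in C -> exists i, pair b = [set f i.+1; f i.+2].
Proof. by move=> bB; apply: (cycle_edge fk (deg3_adj_pair bB)). Qed.

Lemma slot_off_pair b i j : b \in B -> pair b = [set f i.+1; f i.+2] -> f j \in slots b ->
  [/\ j != i %[mod k], j != i.+1 %[mod k], j != i.+2 %[mod k] & j != i.+3 %[mod k]].
Proof.
move=> bB Eb zb; apply: (cycle_far fk).
- by rewrite -Eb (disjointFl (pair_slots_disjoint bB) zb).
- by apply: slot_nadj bB _ zb; rewrite Eb set21.
- by apply: slot_nadj bB _ zb; rewrite Eb set22.
Qed.

Lemma cycle_len_neq4 : k != 4.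
Proof.
apply/eqP => k4.
have no_slots : inner_slots C = 0.
  apply: big1_seq => b /andP[_ bB]; case xC: (bx b \in C) => //.
  have [i Eb] := pair_on_cycle bB xC.
  suff zC z : z \in slots b -> z \in C = false by rewrite (zC (bz b)) ?set21 // (zC (bu b)) ?set22.
  move=> zb; apply/negP => /(cycle_vertsP fk)[j Ez]; rewrite Ez in zb.
  by case: (slot_off_pair bB Eb zb); rewrite k4; lia.
by have := closed_edges (cycle_verts_closed fk); rewrite no_slots (card_cycle_verts fk) k4.
Qed.

(* On an 8-cycle, a vertex z, u of a block whose pair lies on the cycle is at distance 3
   from exactly one end of the pair, so the 8 chords of length 3 are counted by
   [inner_slots C], which [closed_edges] forces to be 10. *)
Section Length8.
Hypothesis k8 : k = 8.
Local Notation chords3 := (chords k f 3).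

Lemma card_chords3 : #|chords3| = 8.
Proof.
rewrite card_imset ?card_ord // => -[n ltn] -[m ltm] /eqP.
rewrite eq_set2 !(cycle_eq fk) => E; apply: val_inj => /=.
by move: E; rewrite /= k8 in ltn ltm *; lia.
Qed.

Lemma chords3_card2 : {in chords3, forall e : {set T}, #|e| = 2}.
Proof.
move=> e /imsetP[[n ltn] _ ->]; rewrite cards2 (cycle_eq fk) /= k8.
by apply/eqP; rewrite eqSS; lia.
Qed.

Lemma chord3_off p : p \notin C -> forall q, ([set p; q] \in chords3) = false.
Proof. by move=> pC q; apply: contraNF pC => /(chords_cycle_verts fk); apply; rewrite set21. Qed.

Lemma block_chords3 b : b \in B ->
  count (mem chords3) (edge_seq b) = (bx b \in C) * ((bz b \in C) + (bu b \in C)).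
Proof.
move=> bB; case xC: (bx b \in C); last first.
  have yC : by_ b \notin C by rewrite -(closed_pair (cycle_verts_closed fk) bB) xC.
  by rewrite /= !(chord3_off (negbT xC)) !(chord3_off yC).
have [i Eb] := pair_on_cycle bB xC.
have slot_chords z : z \in slots b ->
    ([set f i.+1; z] \in chords3) + ([set f i.+2; z] \in chords3) = (z \in C).
  move=> zb; case zC: (z \in C); last by rewrite ![[set _; z]]setUC !(chord3_off (negbT zC)).
  case/(cycle_vertsP fk): zC => j Ez; rewrite Ez in zb *; rewrite !(mem_chords fk).
  by case: (slot_off_pair bB Eb zb); rewrite k8; lia.
have := slot_chords _ (set21 (bz b) (bu b)); have := slot_chords _ (set22 (bz b) (bu b)).
have : pair b \notin chords3 by rewrite Eb (mem_chords fk) k8; lia.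
move/eqP: Eb; rewrite /= eq_set2 => /orP[]/andP[/eqP-> /eqP->]; lia.
Qed.

End Length8.

Lemma cycle_len_neq8 : k != 8.
Proof.
apply/eqP => k8; have clC := cycle_verts_closed fk.
have slots8 : inner_slots C = 8.
  rewrite -(card_chords3 k8) -count_edges; last exact: chords3_card2.
  by apply: eq_big_seq => b bB; rewrite block_chords3.
by have := closed_edges clC; rewrite slots8 (card_cycle_verts fk) k8.
Qed.

Lemma cycle_len_cases : (k == 3) || (k == 7) || (k == 11).
Proof.
have k_gt0 : 0 < k by case: fk.
have := closed_card_mod4 (cycle_verts_closed fk); rewrite (card_cycle_verts fk).
have : k <= 11 by rewrite -T11 -(card_cycle_verts fk) max_card.
by have := cycle_len_neq4; have := cycle_len_neq8; lia.
Qed.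

End DesignCycle.

Lemma cycle_len_11 k f : cycle_walk deg3_adj k f -> k = 11.
Proof.
move=> fk; have := cycle_len_cases fk; case: (eqVneq k 11) => // k_ne11 k_cases.
set R := ~: cycle_verts k f.
have clR : adj_closed deg3_adj R := adj_closedC deg3_adj_sym (cycle_verts_closed fk).
have cardR : k + #|R| = 11 by rewrite -T11 -(card_cycle_verts fk) cardsC.
have [w wR] : exists w, w \in R by apply/set0Pn; rewrite -card_gt0; lia.
have [k1 [f1 [f10 fk1]]] := cycle_through deg3_adj_sym deg3_adj_irr deg3_adj_deg2 w.
have sub1 : cycle_verts k1 f1 \subset R.
  by apply: (cycle_verts_sub deg3_adj_sym fk1 clR); rewrite f10.
have := closed_card_mod4 (adj_closedD deg3_adj_sym clR (cycle_verts_closed fk1)).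
rewrite cardsD (setIidPr sub1) (card_cycle_verts fk1).
have := subset_leq_card sub1; rewrite (card_cycle_verts fk1).
by have := cycle_len_cases fk1; lia.
Qed.

Lemma deg3_pairs_cycle k f : cycle_walk deg3_adj k f ->
  deg3_pairs B = [set [set f i; f (ordS i)] | i : 'I_k].
Proof.
move=> fk; have k_gt0 : 0 < k by case: fk.
have CT : cycle_verts k f = [set: T].
  by apply/eqP; rewrite eqEcard subsetT cardsT (card_cycle_verts fk) (cycle_len_11 fk) T11.
apply/setP => e; apply/idP/imsetP => [|[i _ ->]]; last first.
  by rewrite (cycle_ordS fk); exact: (cycle_adj deg3_adj_sym fk i).
case/imsetP => b bB ->; have xC : bx b \in cycle_verts k f by rewrite CT inE.
have [i Ei] := pair_on_cycle fk bB xC.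
exists (Ordinal (ltn_pmod i.+1 k_gt0)) => //; rewrite Ei (cycle_ordS fk) /=.
congr [set _; _]; apply/eqP; rewrite (cycle_eq fk) ?modn_mod //.
by rewrite -[(_ %% k).+1]addn1 modnDml addn1.
Qed.

End Design.

Theorem lemma3p1 (T : finType) (B : seq (block T)) :
  #|T| = 11 -> K4e_design B -> is_cycle_graph 11 (deg3_pairs B).
Proof.
move=> T11 desB; have /card_gt0P[a _] : 0 < #|T| by rewrite T11.
have [k [f [_ fk]]] :=
  cycle_through (deg3_adj_sym B) (deg3_adj_irr desB) (deg3_adj_deg2 T11 desB) a.
have k11 := cycle_len_11 T11 desB fk; subst k.
exists (fun i : 'I_11 => f i); split; last exact: deg3_pairs_cycle.
by apply: inj_card_bij (cycle_ord_inj fk) _; rewrite card_ord T11.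
Qed.
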